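(* Let $q$ be a prime power, $M\geq2$ an integer, $k\geq 1$, and let $f\in\mathbb{F}_q[x]$ be a SRIM polynomial of degree $2k$. Let $C_f\in\mathrm{Sp}(2k,q)$ be an element with characteristic polynomial $f$, and suppose $\alpha\in\mathrm{Sp}(2k,q)$ satisfies $\alpha^M=C_f$. Then $f(x^M)$ has a SRIM factor of degree $2k$.
   Context: For a monic polynomial $f$ of degree $r$ with $f(0)\neq0$, $f^*(x)=f(0)^{-1}x^rf(x^{-1})$; $f$ is self-reciprocal if $f=f^*$. SRIM means self-reciprocal irreducible monic. $\mathrm{Sp}(2k,q)$ is the symplectic group of a non-degenerate alternating form on $\mathbb{F}_q^{2k}$. *)

From HB Require Import structures.
From mathcomp Require Import all_boot all_order all_algebra all_field.
Set Implicit Arguments. Unset Strict Implicit. Unset Printing Implicit Defensive.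
Import GRing.Theory.
Local Open Scope ring_scope.

(* f^*(x) = f(0)^{-1} x^r f(x^{-1}), r = deg f: the coefficient of x^i in
   x^r f(1/x) is the coefficient of x^(r-i) in f. *)
Definition reciprocal (F : fieldType) (f : {poly F}) : {poly F} :=
  (f`_0)^-1 *: \poly_(i < size f) f`_((size f).-1 - i).

Definition self_reciprocal (F : fieldType) (f : {poly F}) : Prop :=
  f`_0 != 0 /\ f = reciprocal f.

Definition SRIM (F : fieldType) (f : {poly F}) : Prop :=
  [/\ f \is monic, irreducible_poly f & self_reciprocal f].

(* J is the Gram matrix of a non-degenerate alternating bilinear form
   B(u,v) = u *m J *m v^T on row vectors. *)
Definition nondeg_alternating (F : fieldType) (n : nat) (J : 'M[F]_n) : Prop :=
  [/\ J^T = - J, forall i, J i i = 0 & \det J != 0].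

(* A lies in Sp(J): B(uA, vA) = B(u, v) for all u v. *)
Definition symplectic (F : fieldType) (n : nat) (J A : 'M[F]_n) : Prop :=
  A *m J *m A^T = J.

Definition mxpow (F : fieldType) (n : nat) (A : 'M[F]_n) (m : nat) : 'M[F]_n :=
  iter m (mulmx A) 1%:M.

From HB Require Import structures.
From mathcomp Require Import all_boot all_order all_algebra all_field.

Set Implicit Arguments.
Unset Strict Implicit.
Unset Printing Implicit Defensive.
Import GRing.Theory.
Local Open Scope ring_scope.

(* Since alpha^M = C_f, the algebra F[alpha] contains F[C_f], which is a field
   of dimension 2k because f = char_poly C_f is irreducible; as dim F[alpha] is
   at most 2k, the two algebras coincide.  Hence F[alpha] is a domain, so the
   minimal polynomial g of alpha is irreducible of degree 2k, and g divides
   f(x^M) because f(alpha^M) = 0.  Finally alpha^T is conjugate to alpha^-1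
   through the Gram matrix J, which forces g to divide, hence to equal, its
   reciprocal. *)

Lemma mxpowE (F : fieldType) n (A : 'M[F]_n) m : mxpow A m = A ^+ m.
Proof.
elim: m => [|m IHm]; first by rewrite expr0.
by rewrite /mxpow iterS -/(mxpow A m) IHm exprS mulmxE.
Qed.

Section PolyFacts.

Variable F : fieldType.
Implicit Types p u v : {poly F}.

Lemma irredp_dvdpM p u v :
  irreducible_poly p -> p %| u * v -> (p %| u) || (p %| v).
Proof.
move=> p_irr; have [//|pNu] := boolP (p %| u).
by rewrite Gauss_dvdpr // irreducible_poly_coprime.
Qed.

Lemma irredp_coef0_neq0 p : irreducible_poly p -> (2 < size p)%N -> p`_0 != 0.
Proof.
move=> p_irr; apply: contraTneq => p0.
have Xp : 'X %| p.
  by have := dvdp_XsubCl p 0; rewrite polyC0 subr0 /root horner_coef0 p0 eqxx.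
by rewrite -(eqp_size (p_irr _ _ Xp)) ?size_polyX.
Qed.

Lemma size_reciprocal p : p`_0 != 0 -> size (reciprocal p) = size p.
Proof. by move=> p0; rewrite size_scale ?invr_eq0 // size_poly_eq ?subnn. Qed.

Lemma reciprocal_monic p : p`_0 != 0 -> reciprocal p \is monic.
Proof.
move=> p0; rewrite monicE /lead_coef size_reciprocal // coefZ coef_poly.
have p_gt0 : (0 < size p)%N.
  by rewrite size_poly_gt0; apply: contraNneq p0 => ->; rewrite coef0.
by rewrite prednK // leqnn subnn mulVf.
Qed.

End PolyFacts.

Section HornerMx.

Variables (F : fieldType) (n : nat).
Implicit Types (A : 'M[F]_n.+1) (p q u v : {poly F}).

Lemma horner_mx_poly A k (E : nat -> F) :
  horner_mx A (\poly_(i < k) E i) = \sum_(i < k) E i *: A ^+ i.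
Proof.
rewrite poly_def rmorph_sum; apply: eq_bigr => i _.
rewrite -mul_polyC rmorphM /= horner_mx_C rmorphXn /= horner_mx_X.
by rewrite -mulmxE mul_scalar_mx.
Qed.

Lemma horner_mx_coef A p : horner_mx A p = \sum_(i < size p) p`_i *: A ^+ i.
Proof. by rewrite -{1}[p]coefK horner_mx_poly. Qed.

Lemma horner_mx_comp A p q : horner_mx A (p \Po q) = horner_mx (horner_mx A q) p.
Proof.
rewrite comp_polyE rmorph_sum horner_mx_coef; apply: eq_bigr => i _.
by rewrite -mul_polyC rmorphM /= horner_mx_C rmorphXn -mulmxE mul_scalar_mx.
Qed.

Lemma degree_mxminpoly_le A : (degree_mxminpoly A <= n.+1)%N.
Proof.
have := dvdp_leq (monic_neq0 (char_poly_monic A)) (mxminpoly_dvd_char A).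
by rewrite size_mxminpoly size_char_poly.
Qed.

Lemma mxminpoly_char_irr A :
  irreducible_poly (char_poly A) -> mxminpoly A = char_poly A.
Proof.
move=> chi_irr; apply/eqP; rewrite -eqp_monic ?mxminpoly_monic ?char_poly_monic //.
apply: chi_irr (mxminpoly_dvd_char A).
by rewrite size_mxminpoly eqSS -lt0n mxminpoly_nonconstant.
Qed.

Lemma horner_mx_mul_eq0 A u v :
    irreducible_poly (mxminpoly A) -> horner_mx A u * horner_mx A v = 0 ->
  (horner_mx A u == 0) || (horner_mx A v == 0).
Proof.
by move=> irr /eqP; rewrite -rmorphM -!dvd_mxminpoly; apply: irredp_dvdpM.
Qed.

Lemma mxminpoly_irr_of_domain A :
    (forall u v, horner_mx A u * horner_mx A v = 0 ->
       (horner_mx A u == 0) || (horner_mx A v == 0)) ->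
  irreducible_poly (mxminpoly A).
Proof.
move=> domA; set g := mxminpoly A.
have g_nz : g != 0 by rewrite monic_neq0 ?mxminpoly_monic.
split=> [|q q_neq1 qg]; first by rewrite size_mxminpoly ltnS mxminpoly_nonconstant.
have q_nz : q != 0 by apply: contraTneq qg => ->; rewrite dvd0p.
have r_nz : g %/ q != 0 by rewrite divp_eq0 !negb_or g_nz q_nz -leqNgt dvdp_leq.
have /domA/orP[] : horner_mx A (g %/ q) * horner_mx A q = 0.
  by rewrite -rmorphM /= divpK // mx_root_minpoly.
- rewrite -dvd_mxminpoly => /(dvdp_leq r_nz).
  rewrite size_divp // leqNgt ltn_subrL size_poly_gt0 g_nz andbT.
  by rewrite -subn1 subn_gt0 ltn_neqAle eq_sym q_neq1 lt0n size_poly_eq0 q_nz.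
- by rewrite -dvd_mxminpoly => gq; rewrite /eqp qg gq.
Qed.

Section Exponent.

Variables (A : 'M[F]_n.+1) (m : nat).

Lemma powers_mx_exp_sub d :
  (powers_mx (A ^+ m) d <= powers_mx A (degree_mxminpoly A))%MS.
Proof.
apply/row_subP => i; rewrite rowK -exprM.
by have := horner_mx_mem A 'X^(m * i); rewrite rmorphXn /= horner_mx_X.
Qed.

Hypothesis Am_irr : irreducible_poly (char_poly (A ^+ m)).

Lemma degree_mxminpoly_exp_irr : degree_mxminpoly (A ^+ m) = n.+1.
Proof.
apply: succn_inj; rewrite -size_mxminpoly.
by rewrite mxminpoly_char_irr // size_char_poly.
Qed.

Lemma degree_mxminpoly_of_exp_irr : degree_mxminpoly A = n.+1.
Proof.
apply/eqP; rewrite eqn_leq degree_mxminpoly_le -{1}degree_mxminpoly_exp_irr.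
by have := mxrankS (powers_mx_exp_sub (degree_mxminpoly (A ^+ m)));
  rewrite !(eqnP (minpoly_mx_free _)).
Qed.

Lemma horner_mx_exp_irr p :
  horner_mx A p = horner_mx (A ^+ m) (mx_inv_horner (A ^+ m) (horner_mx A p)).
Proof.
rewrite mx_inv_hornerK //; apply: submx_trans (horner_mx_mem _ _) _.
rewrite -(geq_leqif (mxrank_leqif_sup (powers_mx_exp_sub _))).
rewrite !(eqnP (minpoly_mx_free _)).
by rewrite degree_mxminpoly_of_exp_irr degree_mxminpoly_exp_irr.
Qed.

Lemma mxminpoly_exp_irr : irreducible_poly (mxminpoly A).
Proof.
apply: mxminpoly_irr_of_domain => u v.
rewrite (horner_mx_exp_irr u) (horner_mx_exp_irr v).
by apply: horner_mx_mul_eq0; rewrite mxminpoly_char_irr.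
Qed.

Lemma size_mxminpoly_exp_irr : size (mxminpoly A) = n.+2.
Proof. by rewrite size_mxminpoly degree_mxminpoly_of_exp_irr. Qed.

End Exponent.

End HornerMx.

Section Symplectic.

Variables (F : fieldType) (n : nat) (J A : 'M[F]_n.+1).
Hypotheses (J_unit : J \in unitmx) (A_sp : symplectic J A).
Implicit Types p : {poly F}.

Lemma symplectic_exp i : symplectic J (A ^+ i).
Proof.
rewrite /symplectic; elim: i => [|i IHi]; first by rewrite expr0 mul1mx trmx1 mulmx1.
rewrite exprSr -mulmxE trmx_mul !mulmxA -[A ^+ i *m A *m J]mulmxA.
by rewrite -[A ^+ i *m _ *m A^T]mulmxA A_sp.
Qed.

Lemma symplectic_horner_mx_tr p :
  A ^+ (size p).-1 *m J *m (horner_mx A p)^T =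
  horner_mx A (\poly_(i < size p) p`_((size p).-1 - i)) *m J.
Proof.
rewrite horner_mx_coef horner_mx_poly linear_sum mulmx_sumr mulmx_suml.
rewrite (reindex_inj rev_ord_inj) /=; apply: eq_bigr => i _.
have le_i : (i <= (size p).-1)%N.
  by rewrite -ltnS prednK ?ltn_ord // (leq_ltn_trans _ (ltn_ord i)).
have -> : (size p - i.+1 = (size p).-1 - i)%N by rewrite subnS -subn1 subnAC subn1.
rewrite linearZ /= -scalemxAr -scalemxAl -[X in A ^+ X *m J](subnKC le_i) exprD.
by rewrite -mulmxE -!mulmxA [A ^+ _ *m (J *m _)]mulmxA symplectic_exp.
Qed.

Lemma horner_mx_reciprocal_eq0 p :
  horner_mx A p = 0 -> horner_mx A (reciprocal p) = 0.
Proof.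
move=> pA0; have := symplectic_horner_mx_tr p; rewrite pA0 trmx0 mulmx0.
move=> /esym/(canRL (mulmxK J_unit)); rewrite mul0mx linearZ /= => ->.
by rewrite scaler0.
Qed.

Lemma mxminpoly_self_reciprocal :
  (mxminpoly A)`_0 != 0 -> self_reciprocal (mxminpoly A).
Proof.
move=> g0; split=> //; apply/eqP.
rewrite -eqp_monic ?mxminpoly_monic ?reciprocal_monic //.
rewrite -dvdp_size_eqp ?size_reciprocal //.
exact/mxminpoly_min/horner_mx_reciprocal_eq0/mx_root_minpoly.
Qed.

End Symplectic.

Theorem lemma5p1 (F : finFieldType) (M k : nat) (hM : (2 <= M)%N) (hk : (1 <= k)%N)
  (f : {poly F}) (hf : SRIM f) (hdeg : size f = (k.*2).+1)
  (J : 'M[F]_(k.*2)) (hJ : nondeg_alternating J)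
  (Cf alpha : 'M[F]_(k.*2))
  (hC : symplectic J Cf) (hCf : char_poly Cf = f)
  (halpha : symplectic J alpha) (hpow : mxpow alpha M = Cf) :
  exists g : {poly F}, [/\ SRIM g, size g = (k.*2).+1 & g %| f \Po 'X^M].
Proof.
case: k => [//|k] in hk hdeg J hJ Cf alpha hC hCf halpha hpow *.
have [_ f_irr _] := hf; have [_ _ detJ] := hJ.
rewrite mxpowE in hpow; subst Cf f.
have g_irr := mxminpoly_exp_irr f_irr.
have g_size := size_mxminpoly_exp_irr f_irr.
exists (mxminpoly alpha); split=> //.
  split=> //; first exact: mxminpoly_monic.
  apply: mxminpoly_self_reciprocal halpha _; first by rewrite unitmxE unitfE.
  by apply: irredp_coef0_neq0; rewrite ?g_size.
apply: mxminpoly_min.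
by rewrite horner_mx_comp rmorphXn /= horner_mx_X Cayley_Hamilton.
Qed.
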